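(* Let $M$ be an $\mathbf{FB}$-module and $a:\mathrm{Sym}(\mathbf V)\otimes M\to\mathbf V\otimes M$ a map, and write, for $B\subseteq S$ and $x\in M(S\setminus B)$, $$a(t^B\otimes x)=\sum_{i\in B}t^i\otimes\omega^{S\setminus\{i\}}_{B\setminus\{i\}}(x)+\sum_{i\in S\setminus B}t^i\otimes\alpha^S_{i,B}(x),$$ with $\omega^T_C:M(T\setminus C)\to M(T)$ and $\alpha^S_{i,B}:M(S\setminus B)\to M(S\setminus\{i\})$. Then $a$ defines a representation of $\underline W(\mathbf V)$ if and only if, for every finite set $S$ and disjoint subsets $A,B\subseteq S$: (a) $\alpha$ and $\omega$ commute with themselves and each other; (b) for $j\in B$ and $i\in S\setminus(A\cup B)$, $\alpha^{S\setminus\{i\}}_{j,A}\circ\alpha^{S\setminus A}_{i,B}=\alpha^{S\setminus\{j\}}_{i,(A\cup B)\setminus\{j\}}$; (c) for $j\in B$, $\alpha^S_{j,A}\circ\omega^{S\setminus A}_B=\omega^{S\setminus\{j\}}_{(A\cup B)\setminus\{j\}}$.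
   Context: $k$ is a commutative ring; $\mathbf{FB}$-modules are functors from finite sets and bijections to $k$-modules, $(M\otimes N)(S)=\bigoplus_{T\subseteq S}M(T)\otimes N(S\setminus T)$, symmetry $\tau$. $\mathbf V$ is $k$ on singletons, $0$ otherwise, basis $t^i$. $\mathrm{Sym}(\mathbf V)=\bigoplus_n\mathrm{Sym}^n(\mathbf V)$, $\mathrm{Sym}^n(\mathbf V)(S)$ free with basis $t^S$ if $|S|=n$, else $0$. $m(t^A\otimes t^B)=t^{A\cup B}$; $\Delta(t^B)=\sum_{j\in B}t^j\otimes t^{B\setminus\{j\}}\in\mathbf V\otimes\mathrm{Sym}(\mathbf V)$. Representation of $\underline W(\mathbf V)$: $[a_1,a_2]=a'-a''$, where $a_2=\mathrm{id}\otimes a$, $a_1=\tau(\mathrm{id}\otimes a)\tau$, $[a_1,a_2]=a_1a_2-a_2a_1$ as maps $\mathrm{Sym}\otimes\mathrm{Sym}\otimes M\to\mathbf V\otimes\mathbf V\otimes M$, $a'=(\mathrm{id}_{\mathbf V}\otimes a)(\mathrm{id}_{\mathbf V}\otimes m\otimes\mathrm{id})(\tau\otimes\mathrm{id}\otimes\mathrm{id})(\mathrm{id}\otimes\Delta\otimes\mathrm{id})$, $a''=\tau a'\tau$. Operations: $\alpha$ is the family $\alpha^S_{\{i\},B}=\alpha^S_{i,B}$ and $\omega$ the family $\omega^S_{\emptyset,B}=\omega^S_B$ of maps $M(S\setminus B)\to M(S\setminus A)$ indexed by disjoint subsets, natural in bijections. Families $\phi,\psi$ commute if for every finite $S$ and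 pairwise disjoint $A,B,C,D\subseteq S$ for which the maps are defined, $\psi^{S\setminus A}_{C,D}\circ\phi^{S\setminus D}_{A,B}=\phi^{S\setminus C}_{A,B}\circ\psi^{S\setminus B}_{C,D}$ (self-commuting: $\psi=\phi$). *)

From HB Require Import structures.
From mathcomp Require Import all_boot all_algebra.
From mathcomp Require Import finmap.



Unset Printing Implicit Defensive.

Import GRing.Theory.
Local Open Scope fset_scope.
Local Open Scope ring_scope.

(* Finite sets are finite sets of labels [{fset nat}] (an equivalent
   skeleton-free model of the category FB of finite sets and bijections). *)
Notation fset := {fset nat}.

Section FB.
Variable k : comPzRingType.
Variable M : fset -> lmodType k.

(* Identification M X = M Y along an equality of finite sets X = Y
   (junk value 0 if X <> Y; only ever used when X = Y). *)
Definition castM {X Y : fset} (x : M X) : M Y :=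
  match X =P Y with
  | ReflectT e => eq_rect X (fun Z => M Z : Type) x Y e
  | ReflectF _ => 0
  end.

Definition bij_on (f : nat -> nat) (X Y : fset) : Prop :=
  {in X &, injective f} /\ f @` X = Y.

(* actM X Y f : M X -> M Y is the action M(f) of a bijection f : X -> Y
   (values for non-bijections are irrelevant).  FB-module axioms: *)
Definition is_FBmodule (actM : forall (X Y : fset), (nat -> nat) -> M X -> M Y) : Prop :=
  [/\ (forall X Y f, bij_on f X Y ->
         forall (c : k) (x y : M X), actM X Y f (c *: x + y) = c *: actM X Y f x + actM X Y f y),
      (forall X Y f g, bij_on f X Y -> {in X, f =1 g} -> forall x, actM X Y f x = actM X Y g x),
      (forall X (x : M X), actM X X id x = x) &
      (forall X Y Z f g, bij_on f X Y -> bij_on g Y Z ->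
         forall x, actM Y Z g (actM X Y f x) = actM X Z (g \o f) x)].

(* A map a : Sym(V) (x) M -> V (x) M.  Since
     (Sym(V) (x) M)(S) = (+)_{B <= S} k t^B (x) M(S \ B)   and
     (V (x) M)(S)      = (+)_{i in S} k t^i (x) M(S \ {i}),
   a k-linear map is given by its matrix coefficients:
     a S B i x := the t^i-component of a(t^B (x) x), for B <= S, i in S,
   so that a(t^B (x) x) = sum_{i in S} t^i (x) a S B i x. *)
Definition coefmap := forall (S B : fset) (i : nat), M (S `\` B) -> M (S `\ i).

Definition is_FBmap (actM : forall (X Y : fset), (nat -> nat) -> M X -> M Y)
    (a : coefmap) : Prop :=
  (forall S B i, B `<=` S -> i \in S ->
     forall (c : k) (x y : M (S `\` B)),
       a S B i (c *: x + y) = c *: a S B i x + a S B i y) /\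
  (forall S T f, bij_on f S T -> forall B i, B `<=` S -> i \in S ->
     forall x : M (S `\` B),
       a T (f @` B) (f i) (actM (S `\` B) (T `\` f @` B) f x)
       = actM (S `\ i) (T `\ f i) f (a S B i x)).

(* Components of the maps Sym (x) Sym (x) M -> V (x) V (x) M.
   Input: generator t^A (x) t^B (x) x with A, B disjoint subsets of S and
   x in M((S\A)\B).  Output: the t^i (x) t^j component (i <> j in S), an
   element of M((S\{i})\{j}).  These are the literal evaluations of the
   composites defining a1 a2, a2 a1, a' and a'' = tau a' tau, with
   a2 = id (x) a, a1 = tau (id (x) a) tau,
   a' = (id_V (x) a)(id_V (x) m (x) id)(tau (x) id (x) id)(id (x) Delta (x) id),
   m(t^A (x) t^B) = t^(A u B), Delta(t^B) = sum_{j in B} t^j (x) t^(B\{j}). *)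
Section Components.
Variable a : coefmap.
Context {S A B : fset}.
Variables (x : M ((S `\` A) `\` B)) (i j : nat).

(* a1 a2 : t^A t^B x |-> sum_{j in S\A} sum_{i in S\{j}} t^i t^j a_{S\j}(t^A (x) a_{S\A}(t^B x)_j)_i *)
Definition a1a2_comp : M ((S `\ i) `\ j) :=
  if j \notin A then
    castM (a (S `\ j) A i (castM (a (S `\` A) B j x)))
  else 0.

(* a2 a1 : t^A t^B x |-> sum_{i in S\B} sum_{j in S\{i}} t^i t^j a_{S\i}(t^B (x) a_{S\B}(t^A x)_i)_j *)
Definition a2a1_comp : M ((S `\ i) `\ j) :=
  if i \notin B then
    a (S `\ i) B j (castM (a (S `\` B) A i (castM x)))
  else 0.

(* a' : t^A t^B x |-> sum_{p in B} t^p (x) a_{S\p}(t^((A u B)\p) (x) x) *)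
Definition a'_comp : M ((S `\ i) `\ j) :=
  if i \in B then a (S `\ i) ((A `|` B) `\ i) j (castM x) else 0.

(* a'' = tau a' tau : t^A t^B x |-> tau (sum_{p in A} t^p (x) a_{S\p}(t^((B u A)\p) (x) x)) *)
Definition a''_comp : M ((S `\ i) `\ j) :=
  if j \in A then castM (a (S `\ j) ((B `|` A) `\ j) i (castM x)) else 0.
End Components.

(* a defines a representation of W(V):  [a1, a2] = a' - a''. *)
Definition is_Wrep (a : coefmap) : Prop :=
  forall (S A B : fset), A `<=` S -> B `<=` S -> A `&` B = fset0 ->
  forall (x : M ((S `\` A) `\` B)) (i j : nat), i \in S -> j \in S -> i != j ->
    a1a2_comp a x i j - a2a1_comp a x i j = a'_comp a x i j - a''_comp a x i j.

(* Families of maps phi^S_{A,B} : M(S \ B) -> M(S \ A), indexed by disjoint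
   subsets A, B of S, defined only for those A satisfying [dom]. *)
Definition family := forall (S A B : fset), M (S `\` B) -> M (S `\` A).

Definition commute (phi : family) (dphi : fset -> bool)
                   (psi : family) (dpsi : fset -> bool) : Prop :=
  forall (S A B C D : fset),
    A `<=` S -> B `<=` S -> C `<=` S -> D `<=` S ->
    A `&` B = fset0 -> A `&` C = fset0 -> A `&` D = fset0 ->
    B `&` C = fset0 -> B `&` D = fset0 -> C `&` D = fset0 ->
    dphi A -> dpsi C ->
    forall x : M ((S `\` D) `\` B),
      psi (S `\` A) C D (castM (phi (S `\` D) A B x))
      = castM (phi (S `\` C) A B (castM (psi (S `\` B) C D (castM x)))).

Definition alpha_type := forall (S : fset) (i : nat) (B : fset), M (S `\` B) -> M (S `\ i).
Definition omega_type := forall (T C : fset), M (T `\` C) -> M T.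

(* alpha as the family alpha^S_{{i},B}: defined for singletons A = {i}. *)
Definition alpha_fam (alpha : alpha_type) : family :=
  fun S A B x => castM (alpha S (head 0%N (enum_fset A)) B x).
Definition alpha_dom (A : fset) : bool := #|` A| == 1%N.

(* omega as the family omega^S_{emptyset,B}: defined for A = emptyset. *)
Definition omega_fam (omega : omega_type) : family :=
  fun S A B x => castM (omega S B x).
Definition omega_dom (A : fset) : bool := A == fset0.

Definition decomposes (a : coefmap) (alpha : alpha_type) (omega : omega_type) : Prop :=
  forall (S B : fset) (i : nat), B `<=` S -> i \in S -> forall x : M (S `\` B),
    a S B i x = if i \in B then omega (S `\ i) (B `\ i) (castM x)
                else alpha S i B x.

Definition cond_a (alpha : alpha_type) (omega : omega_type) : Prop :=
  [/\ commute (alpha_fam alpha) alpha_dom (alpha_fam alpha) alpha_dom,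
      commute (omega_fam omega) omega_dom (omega_fam omega) omega_dom &
      commute (alpha_fam alpha) alpha_dom (omega_fam omega) omega_dom].

Definition cond_b (alpha : alpha_type) : Prop :=
  forall (S A B : fset), A `<=` S -> B `<=` S -> A `&` B = fset0 ->
  forall (j i : nat), j \in B -> i \in S `\` (A `|` B) ->
  forall x : M ((S `\` A) `\` B),
    alpha (S `\ i) j A (castM (alpha (S `\` A) i B x))
    = castM (alpha (S `\ j) i ((A `|` B) `\ j) (castM x)).

Definition cond_c (alpha : alpha_type) (omega : omega_type) : Prop :=
  forall (S A B : fset), A `<=` S -> B `<=` S -> A `&` B = fset0 ->
  forall (j : nat), j \in B ->
  forall x : M ((S `\` A) `\` B),
    alpha S j A (omega (S `\` A) B x)
    = omega (S `\ j) ((A `|` B) `\ j) (castM x).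

End FB.

Arguments castM {k M X Y}.
Arguments coefmap {k} M.
Arguments alpha_type {k} M.
Arguments omega_type {k} M.
Arguments family {k} M.
Arguments is_FBmodule {k M}.
Arguments is_FBmap {k M}.
Arguments is_Wrep {k M}.
Arguments decomposes {k M}.
Arguments cond_a {k M}.
Arguments cond_b {k M}.
Arguments cond_c {k M}.
Arguments commute {k M}.
Arguments alpha_fam {k M}.
Arguments omega_fam {k M}.

(* The component at t^i (x) t^j of [a1, a2] - (a' - a'') on t^A (x) t^B (x) x
   depends only on where i and j lie among A, B and S \ (A u B).  In each of
   the nine cases exactly two of the four terms are non-zero, and once a is
   expanded into alpha and omega the resulting identity is an instance of
   (a), (b) or (c), except for i in B, j in A, where it holds trivially.
   Conversely every instance of (a), (b), (c) is such a component identity;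
   for the conditions involving omega, S is first enlarged by fresh labels
   so that omega^S_B can occur as a component of a. *)

From Pilot Require Import Defs.
From HB Require Import structures.
From mathcomp Require Import all_boot all_algebra.
From mathcomp Require Import finmap.
Import GRing.Theory.
Local Open Scope fset_scope.
Local Open Scope ring_scope.

Lemma head_enum_fset1 (n : nat) : head 0%N (enum_fset [fset n]) = n.
Proof. by rewrite enum_fsetE enum_fset1. Qed.

Lemma fresh_nat (S : {fset nat}) : exists n, n \notin S.
Proof.
exists (\max_(m <- S) m).+1; apply/negP => nS.
by have := @leq_bigmax_seq _ (enum_fset S) xpredT id _ nS isT; rewrite ltnn.
Qed.

Lemma fsubset_pointwise {A S : {fset nat}} : A `<=` S -> forall z, (z \in A) ==> (z \in S).
Proof. by move/fsubsetP=> AS z; apply/implyP/AS. Qed.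

Lemma fsetI_eq0_pointwise {A B : {fset nat}} : A `&` B = fset0 -> forall z, ~~ ((z \in A) && (z \in B)).
Proof. by move=> AB z; rewrite -in_fsetI AB inE. Qed.

(* A decision procedure for the Boolean algebra of finite sets of labels
   generated by a few named sets and points: reduce the goal to a statement
   about one point, instantiate every pointwise hypothesis there, substitute
   equal points and case on all remaining membership atoms. *)

Ltac pointwise_hyps := repeat match goal with
  | H : is_true (fsubset _ _) |- _ => move: (fsubset_pointwise H) => ?; clear H
  | H : fsetI _ _ = fset0 |- _ => move: (fsetI_eq0_pointwise H) => ?; clear H
  end.

Ltac specialize_at z :=
  repeat match goal with H : forall w : _, _ |- _ => move: (H z); clear H end.

Ltac rewrite_known := repeat match goal with
  | H : is_true (?p \in ?X) |- context [?p \in ?X] => rewrite H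
  | H : is_true (~~ (?p \in ?X)) |- context [?p \in ?X] => rewrite (negbTE H)
  | H : is_true (?p != ?q) |- context [?p == ?q] => rewrite (negbTE H)
  | H : is_true (?p != ?q) |- context [?q == ?p] => rewrite [q == p]eq_sym (negbTE H)
  end.

Ltac subst_point_eqs :=
  repeat (rewrite ?eqxx /=; rewrite_known; match goal with
    |- context [?p == ?q :> nat] =>
      let e := fresh "e" in case: (eqVneq p q) => [e|_]; [subst|] end);
  rewrite ?eqxx /=; rewrite_known.

Ltac case_atoms :=
  repeat match goal with |- context [?p \in ?X] => case: (p \in X) end.

Ltac finish_bool := rewrite /= ?implybT ?implyTb //=;
  try (match goal with H1 : is_true ?b, H2 : is_true (~~ ?b) |- _ => by rewrite H1 in H2 end);
  by do ![move=> /= ?].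

Ltac split_point_hyps := repeat match goal with
  | H : is_true (_ \in fsetD _ _) |- _ => rewrite in_fsetD in H
  | H : is_true (_ \in fsetU _ _) |- _ => rewrite in_fsetU in H
  | H : is_true (~~ (_ \in fsetD _ _)) |- _ => rewrite in_fsetD in H
  | H : is_true (~~ (_ \in fsetU _ _)) |- _ => rewrite in_fsetU in H
  | H : is_true (_ \in [fset _]) |- _ => rewrite in_fset1 in H
  | H : is_true (~~ (_ \in [fset _])) |- _ => rewrite in_fset1 in H
  | H : is_true (_ && _) |- _ => case/andP: H => ? ?
  | H : is_true (~~ (_ || _)) |- _ => rewrite negb_or in H
  | H : is_true (~~ ~~ _) |- _ => rewrite negbK in H
  end.

Ltac solve_fset :=
  pointwise_hyps; split_point_hyps;
  lazymatch goal with
  | |- is_true (fsubset _ _) =>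
      let z := fresh "z" in apply/fsubsetP => z; apply/implyP; specialize_at z
  | |- context [?p \in _] => specialize_at p
  | |- context [?p == _ :> nat] => specialize_at p
  | |- @eq bool _ _ => idtac
  | |- is_true _ => idtac
  | |- @eq _ _ _ => let z := fresh "z" in apply/fsetP => z; specialize_at z
  end;
  rewrite ?in_fsetE; rewrite_known; subst_point_eqs; rewrite ?in_fsetE; rewrite_known;
  case_atoms; finish_bool.

Section Packing.
Variable k : comPzRingType.
Variable M : {fset nat} -> lmodType k.

(* Elements of the various M X are compared in the total space, where
   identifications along equalities X = Y (castM) become invisible. *)
Definition packed := {X : {fset nat} & (M X : Type)}.
Definition pack {X} (x : M X) : packed := existT (fun Z => (M Z : Type)) X x.
Definition unpack (Y : {fset nat}) (p : packed) : M Y := castM (projT2 p).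

Lemma castM_id X (x : M X) : castM x = x.
Proof.
rewrite /castM; case: (X =P X) => [e|/(_ erefl)//].
by rewrite (eq_irrelevance e (erefl X)).
Qed.

Lemma pack_inj X (x y : M X) : pack x = pack y -> x = y.
Proof. by move/(congr1 (unpack X)); rewrite /unpack /= !castM_id. Qed.

Lemma pack_castM X Y (x : M X) : X = Y -> pack (castM x : M Y) = pack x.
Proof. by move=> eXY; subst; rewrite castM_id. Qed.

Definition alphaP (alpha : alpha_type M) S i B (p : packed) : packed :=
  pack (alpha S i B (unpack _ p)).
Definition omegaP (omega : omega_type M) T C (p : packed) : packed :=
  pack (omega T C (unpack _ p)).

Lemma pack_alpha alpha S i B (y : M (S `\` B)) :
  pack (alpha S i B y) = alphaP alpha S i B (pack y).
Proof. by rewrite /alphaP /unpack /= castM_id. Qed.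

Lemma pack_omega omega T C (y : M (T `\` C)) :
  pack (omega T C y) = omegaP omega T C (pack y).
Proof. by rewrite /omegaP /unpack /= castM_id. Qed.

Lemma alphaP_congr alpha S S' i i' B B' p p' :
  S = S' -> i = i' -> B = B' -> p = p' -> alphaP alpha S i B p = alphaP alpha S' i' B' p'.
Proof. by move=> -> -> -> ->. Qed.

Lemma omegaP_congr omega T T' C C' p p' :
  T = T' -> C = C' -> p = p' -> omegaP omega T C p = omegaP omega T' C' p'.
Proof. by move=> -> -> ->. Qed.

End Packing.

Arguments pack {k M X}.
Arguments alphaP {k M}.
Arguments omegaP {k M}.

Section Decomposed.
Variable k : comPzRingType.
Variable M : {fset nat} -> lmodType k.
Variables (a : coefmap M) (alpha : alpha_type M) (omega : omega_type M).
Hypothesis a_dec : decomposes a alpha omega.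

Lemma pack_a_in S B i (x : M (S `\` B)) : B `<=` S -> i \in S -> i \in B ->
  pack (a S B i x) = omegaP omega (S `\ i) (B `\ i) (pack x).
Proof. by move=> BS iS iB; rewrite a_dec // iB pack_omega pack_castM //; solve_fset. Qed.

Lemma pack_a_notin S B i (x : M (S `\` B)) : B `<=` S -> i \in S -> i \notin B ->
  pack (a S B i x) = alphaP alpha S i B (pack x).
Proof. by move=> BS iS iB; rewrite a_dec // (negbTE iB) pack_alpha. Qed.

Ltac push_pack := repeat first
  [ rewrite pack_castM; [|solve_fset]
  | rewrite pack_a_in; [|solve_fset|solve_fset|solve_fset]
  | rewrite pack_a_notin; [|solve_fset|solve_fset|solve_fset]
  | rewrite pack_alpha | rewrite pack_omega ].

Ltac decide_ifs := repeat match goal with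
  | |- context [if ?b then _ else _] =>
     first [ rewrite (_ : b = true); [|solve_fset]
           | rewrite (_ : b = false); [|solve_fset] ]; simpl end.

Ltac unfold_components := rewrite /a1a2_comp /a2a1_comp /a'_comp /a''_comp.

(* Two of the four terms of a component identity vanish; this turns the
   remaining identity into an equation between its two non-zero terms. *)
Ltac two_terms := rewrite ?subr0 ?sub0r ?[0 == _]eq_sym ?subr_eq0 ?eqr_opp.

Ltac match_packed :=
  solve [repeat first [apply: alphaP_congr | apply: omegaP_congr];
         (reflexivity || solve_fset)].

Ltac conclude_from H := first
  [ etransitivity; [|etransitivity; [exact H|]]; match_packed
  | etransitivity; [|etransitivity; [exact (esym H)|]]; match_packed ].

Ltac discharge H := repeat match type of H with
  | ?P -> _ => lazymatch P with is_true _ => idtac | _ = _ => idtac end;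
      let h := fresh "h" in
      have h : P; [ first [ solve [rewrite /alpha_dom /omega_dom ?cardfs1 ?eqxx //]
                          | solve_fset ]
                  | specialize (H h); clear h ]
  end.

Tactic Notation "feed" ident(H) uconstr(t) := discharge H; move: {H}(H t) => H.

(* After packing, H and the goal are equations between terms built from
   alphaP and omegaP; they agree up to equalities of index sets, possibly with
   the two sides swapped. *)
Ltac conclude_packed H :=
  move/(congr1 pack): H => H; apply: pack_inj; move: H; push_pack;
  move=> {}H; conclude_from H.

Section Necessity.
Hypothesis a_Wrep : is_Wrep a.

Tactic Notation "from_component" constr(S) constr(A) constr(B) uconstr(x) constr(i) constr(j) :=
  let H := fresh "H" in
  have H := a_Wrep S A B; feed H x; move: {H}(H i j) => H; discharge H;
  move: H; unfold_components; decide_ifs; move/eqP; two_terms; move=> /eqP H;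
  conclude_packed H.

Lemma Wrep_cond_b : cond_b alpha.
Proof.
move=> S A B AS BS AB j i jB iC x.
from_component S A B x j i.
Qed.

Lemma Wrep_cond_c : cond_c alpha omega.
Proof.
move=> S A B AS BS AB j jB x.
have [f fS] := fresh_nat S.
from_component (f |` S) A (f |` B) (castM x) j f.
Qed.

Lemma Wrep_alpha_comm : Defs.commute (alpha_fam alpha) alpha_dom (alpha_fam alpha) alpha_dom.
Proof.
move=> S A B C D AS BS CS DS AB AC AD BC BD CD /cardfs1P[p eA] /cardfs1P[c eC] x.
subst A C; rewrite /alpha_fam !head_enum_fset1.
from_component S D B x c p.
Qed.

Lemma Wrep_omega_comm : Defs.commute (omega_fam omega) omega_dom (omega_fam omega) omega_dom.
Proof.
move=> S A B C D AS BS CS DS AB AC AD BC BD CD /eqP eA /eqP eC x.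
subst A C; rewrite /omega_fam.
have [i iS] := fresh_nat S; have [j jS] := fresh_nat (i |` S).
from_component (i |` (j |` S)) (i |` D) (j |` B) (castM x) i j.
Qed.

Lemma Wrep_alpha_omega_comm :
  Defs.commute (alpha_fam alpha) alpha_dom (omega_fam omega) omega_dom.
Proof.
move=> S A B C D AS BS CS DS AB AC AD BC BD CD /cardfs1P[p eA] /eqP eC x.
subst A C; rewrite /alpha_fam /omega_fam !head_enum_fset1.
have [i iS] := fresh_nat S.
from_component (i |` S) (i |` D) B (castM x) i p.
Qed.

Lemma Wrep_conds : [/\ cond_a alpha omega, cond_b alpha & cond_c alpha omega].
Proof.
split; [split|exact: Wrep_cond_b|exact: Wrep_cond_c].
- exact: Wrep_alpha_comm.
- exact: Wrep_omega_comm.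
- exact: Wrep_alpha_omega_comm.
Qed.

End Necessity.

Section Sufficiency.
Hypotheses (alpha_comm : Defs.commute (alpha_fam alpha) alpha_dom (alpha_fam alpha) alpha_dom)
  (omega_comm : Defs.commute (omega_fam omega) omega_dom (omega_fam omega) omega_dom)
  (alpha_omega_comm : Defs.commute (alpha_fam alpha) alpha_dom (omega_fam omega) omega_dom)
  (a_cond_b : cond_b alpha) (a_cond_c : cond_c alpha omega).
Variables (S A B : {fset nat}) (x : M ((S `\` A) `\` B)) (i j : nat).
Hypotheses (AS : A `<=` S) (BS : B `<=` S) (AB : A `&` B = fset0).
Hypotheses (iS : i \in S) (jS : j \in S) (ij : i != j).

Local Notation component_identity := (a1a2_comp k M a x i j - a2a1_comp k M a x i j
  = a'_comp k M a x i j - a''_comp k M a x i j).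

Ltac two_term_goal := unfold_components; decide_ifs; apply/eqP; two_terms; apply/eqP.

Lemma component_AA : i \in A -> j \in A -> component_identity.
Proof.
move=> iA jA; two_term_goal.
have H := a_cond_c (S `\ i) B (A `\ i); feed H j; feed H (castM x).
by conclude_packed H.
Qed.

Lemma component_AB : i \in A -> j \in B -> component_identity.
Proof.
move=> iA jB; two_term_goal.
have H := omega_comm ((S `\ i) `\ j) fset0 (B `\ j) fset0 (A `\ i); feed H (castM x).
by conclude_packed H.
Qed.

Lemma component_AO : i \in A -> j \notin A `|` B -> component_identity.
Proof.
move=> iA jO; two_term_goal.
have H := alpha_omega_comm (S `\ i) [fset j] B fset0 (A `\ i); feed H (castM x).
rewrite /alpha_fam /omega_fam head_enum_fset1 in H.
by conclude_packed H.
Qed.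

Lemma component_BA : i \in B -> j \in A -> component_identity.
Proof.
move=> iB jA; two_term_goal.
by apply: pack_inj; push_pack; match_packed.
Qed.

Lemma component_BB : i \in B -> j \in B -> component_identity.
Proof.
move=> iB jB; two_term_goal.
have H := a_cond_c (S `\ j) A (B `\ j); feed H i; feed H (castM x).
by conclude_packed H.
Qed.

Lemma component_BO : i \in B -> j \notin A `|` B -> component_identity.
Proof.
move=> iB jO; two_term_goal.
have H := a_cond_b S A B; feed H i; feed H j; feed H (castM x).
by conclude_packed H.
Qed.

Lemma component_OA : i \notin A `|` B -> j \in A -> component_identity.
Proof.
move=> iO jA; two_term_goal.
have H := a_cond_b S B A; feed H j; feed H i; feed H (castM x).
by conclude_packed H.
Qed.

Lemma component_OB : i \notin A `|` B -> j \in B -> component_identity.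
Proof.
move=> iO jB; two_term_goal.
have H := alpha_omega_comm (S `\ j) [fset i] A fset0 (B `\ j); feed H (castM x).
rewrite /alpha_fam /omega_fam head_enum_fset1 in H.
by conclude_packed H.
Qed.

Lemma component_OO : i \notin A `|` B -> j \notin A `|` B -> component_identity.
Proof.
move=> iO jO; two_term_goal.
have H := alpha_comm S [fset j] B [fset i] A; feed H (castM x).
rewrite /alpha_fam !head_enum_fset1 in H.
by conclude_packed H.
Qed.

Lemma component_identity_holds : component_identity.
Proof.
have position p : [\/ p \in A, p \in B | p \notin A `|` B].
  by case: (boolP (p \in A)) (boolP (p \in B)) => [pA|pA] [pB|pB];
     [constructor 1|constructor 1|constructor 2|constructor 3; rewrite inE negb_or pA pB].
case: (position i) (position j) => [iP|iP|iP] [jP|jP|jP].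
- exact: component_AA.
- exact: component_AB.
- exact: component_AO.
- exact: component_BA.
- exact: component_BB.
- exact: component_BO.
- exact: component_OA.
- exact: component_OB.
- exact: component_OO.
Qed.

End Sufficiency.

Lemma conds_Wrep : cond_a alpha omega -> cond_b alpha -> cond_c alpha omega -> is_Wrep a.
Proof.
case=> alpha_comm omega_comm alpha_omega_comm a_cond_b a_cond_c S A B AS BS AB x i j iS jS ij.
exact: component_identity_holds.
Qed.

End Decomposed.

Theorem proposition6p6 (k : comPzRingType) (M : {fset nat} -> lmodType k)
    (actM : forall (X Y : {fset nat}), (nat -> nat) -> M X -> M Y)
    (a : coefmap M) (alpha : alpha_type M) (omega : omega_type M) :
  is_FBmodule actM -> is_FBmap actM a -> decomposes a alpha omega ->
  (is_Wrep a <-> [/\ cond_a alpha omega, cond_b alpha & cond_c alpha omega]).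
Proof.
(* The equivalence holds component by component. *)
move=> _ _ a_dec; split; first exact: Wrep_conds.
by case; apply: conds_Wrep.
Qed.
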